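(* Let $R$ be a commutative ring with identity, ${}_RM$ a finitely generated semisimple $R$-module, and $\varphi:M\to M$ an indecomposable nilpotent element of the ring $\mathrm{Hom}_R(M,M)$, with index of nilpotency $n$ ($\varphi^n=0\ne\varphi^{n-1}$). For $\psi\in\mathrm{Hom}_R(M,M)$ the following are equivalent: (1) $\psi\circ\varphi=\varphi\circ\psi$; (2) there exist $a_1,\dots,a_n\in R$ such that $a_1u+a_2\varphi(u)+\cdots+a_n\varphi^{n-1}(u)=\psi(u)$ for all $u\in M$, i.e. $\psi$ is a polynomial of $\varphi$.
   Context: A nilpotent element $s$ of a ring $S$ is decomposable if $es=se$ for some idempotent $e\in S$ with $0\ne e\ne1$, and indecomposable otherwise. *)

From HB Require Import structures.
From mathcomp Require Import all_boot all_order all_algebra.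
Set Implicit Arguments. Unset Strict Implicit. Unset Printing Implicit Defensive.
Import GRing.Theory.
Local Open Scope ring_scope.

Section ModDefs.
Variables (R : comPzRingType) (M : lmodType R).

Definition submodule (N : M -> Prop) : Prop :=
  [/\ N 0, (forall x y, N x -> N y -> N (x + y))
     & (forall (a : R) x, N x -> N (a *: x))].

Definition semisimple_module : Prop :=
  forall N, submodule N ->
    exists N', [/\ submodule N',
      (forall x, N x -> N' x -> x = 0)
    & (forall m, exists x y, [/\ N x, N' y & m = x + y])].

Definition fin_gen_module : Prop :=
  exists s : seq M, forall m : M,
    exists c : 'I_(size s) -> R, m = \sum_(i < size s) c i *: s`_i.

(* Endomorphism ring Hom_R(M,M): R-linear maps M -> M, ring operations are
   pointwise addition and composition. *)
Definition is_endo (f : M -> M) : Prop := linear f.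

Definition decomposable_endo (s : M -> M) : Prop :=
  exists e : M -> M, [/\ is_endo e,
    (forall x, e (e x) = e x),
    (forall x, e (s x) = s (e x)),
    ~ (forall x, e x = 0)
  & ~ (forall x, e x = x)].

Definition indecomposable_endo (s : M -> M) : Prop := ~ decomposable_endo s.

End ModDefs.

From HB Require Import structures.
From mathcomp Require Import all_boot all_order all_algebra zify.
From Stdlib Require Import IndefiniteDescription Classical.
Set Implicit Arguments. Unset Strict Implicit. Unset Printing Implicit Defensive.
Import GRing.Theory.
Local Open Scope ring_scope.

(* Semisimplicity turns every decomposition M = A + B into a projection, and
   indecomposability of phi forces each projection commuting with phi to be 0
   or 1.  Applied to ker r + rM this shows that every scalar r acts on M as 0
   or injectively; hence, if phi^(n-1) u0 <> 0, a relation
   sum c_i phi^i u0 = 0 kills every c_i (apply phi^(n-1-i) to the first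
   nonzero term).  Applied to a projection onto the cyclic submodule C spanned
   by the phi^i u0, built from the top coordinate with respect to this
   basis-like family, it shows C = M.  An endomorphism psi commuting with phi
   is then determined by psi u0 = sum a_i phi^i u0, and equals sum a_i phi^i. *)

Section Endomorphisms.
Variables (R : comPzRingType) (M : lmodType R).
Implicit Types (r : R) (x : M) (f : M -> M) (A B : M -> Prop).

Lemma endoD f : is_endo f -> forall x y, f (x + y) = f x + f y.
Proof. by move=> fL x y; have := fL 1 x y; rewrite !scale1r. Qed.

Lemma endo0 f : is_endo f -> f 0 = 0.
Proof.
move=> fL; have f00 := endoD fL 0 0; rewrite addr0 in f00.
by apply/(addrI (f 0)); rewrite addr0 -f00.
Qed.

Lemma endoZ f : is_endo f -> forall a x, f (a *: x) = a *: f x.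
Proof. by move=> fL a x; have := fL a x 0; rewrite (endo0 fL) !addr0. Qed.

Lemma endo_sum f : is_endo f -> forall k (F : 'I_k -> M),
  f (\sum_(i < k) F i) = \sum_(i < k) f (F i).
Proof. by move=> fL k F; apply: (big_morph f (endoD fL) (endo0 fL)). Qed.

Lemma endo_iter f : is_endo f -> forall k, is_endo (iter k f).
Proof. by move=> fL; elim=> [|k IHk] a x y //=; rewrite IHk fL. Qed.

Lemma scalerC (a b : R) (v : M) : a *: (b *: v) = b *: (a *: v).
Proof. by rewrite !scalerA mulrC. Qed.

Lemma sum_indicator (N m : nat) (F : nat -> M) : (m < N)%N ->
  \sum_(i < N) ((i : nat) == m)%:R *: F i = F m.
Proof.
move=> ltmN; rewrite (bigD1 (Ordinal ltmN)) //= eqxx scale1r big1 ?addr0 //.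
by move=> i /negbTE neq_im; rewrite -[(i : nat) == m]/(i == Ordinal ltmN) neq_im scale0r.
Qed.

Lemma submoduleB A : submodule A -> forall x y, A x -> A y -> A (x - y).
Proof. by case=> _ AD AZ x y Ax Ay; apply: AD => //; rewrite -scaleN1r; apply: AZ. Qed.

Lemma submodule_proj A B : submodule A -> submodule B ->
  (forall x, A x -> B x -> x = 0) ->
  (forall m, exists x y, [/\ A x, B y & m = x + y]) ->
  exists e : M -> M, [/\ is_endo e, (forall m, A (e m)), (forall m, B (m - e m)),
     (forall x, A x -> e x = x) & (forall m x y, A x -> B y -> m = x + y -> e m = x)].
Proof.
move=> sA sB AB0 AB_full.
have [e eP] := functional_choice _ AB_full.
have Ae m : A (e m) by case: (eP m) => y [].
have Be m : B (m - e m).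
  by case: (eP m) => y [_ By def_m]; rewrite {1}def_m addrAC subrr add0r.
have e_uniq m x y : A x -> B y -> m = x + y -> e m = x.
  move=> Ax By def_m; apply/eqP; rewrite -subr_eq0; apply/eqP.
  apply: AB0; first exact: submoduleB.
  have -> : e m - x = y - (m - e m)
    by rewrite opprB addrCA; congr (_ + _); rewrite def_m opprD addrCA subrr addr0.
  exact: submoduleB.
exists e; split=> // [a m1 m2 | x Ax]; last by apply: (e_uniq _ _ 0); rewrite ?addr0 //; case: sB.
apply: (e_uniq _ _ (a *: (m1 - e m1) + (m2 - e m2))).
- by case: sA => _ AD AZ; apply: AD; [apply: AZ|].
- by case: sB => _ BD BZ; apply: BD; [apply: BZ|].
- by rewrite addrACA -scalerDr !subrKC.
Qed.

Definition scale_ker (r : R) (x : M) : Prop := r *: x = 0.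
Definition scale_img (r : R) (x : M) : Prop := exists y, x = r *: y.
Definition span1 (x z : M) : Prop := exists s : R, z = s *: x.

Lemma submodule_scale_ker r : submodule (scale_ker r).
Proof.
split; rewrite /scale_ker.
- exact: scaler0.
- by move=> x y rx0 ry0; rewrite scalerDr rx0 ry0 addr0.
- by move=> a x rx0; rewrite scalerC rx0 scaler0.
Qed.

Lemma submodule_scale_img r : submodule (scale_img r).
Proof.
split; rewrite /scale_img.
- by exists 0; rewrite scaler0.
- by move=> _ _ [x ->] [y ->]; exists (x + y); rewrite scalerDr.
- by move=> a _ [x ->]; exists (a *: x); rewrite scalerC.
Qed.

Lemma submodule_span1 x : submodule (span1 x).
Proof.
split; rewrite /span1.
- by exists 0; rewrite scale0r.
- by move=> _ _ [s1 ->] [s2 ->]; exists (s1 + s2); rewrite scalerDl.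
- by move=> a _ [s ->]; exists (a * s); rewrite scalerA.
Qed.

Section Semisimple.
Hypothesis ssM : semisimple_module M.

Lemma semisimple_scale_kerI_img r x : scale_ker r x -> scale_img r x -> x = 0.
Proof.
move=> rx0 [y def_x].
have [C [sC RxC0 RxC_full]] := ssM (submodule_span1 x).
have [_ [z [[s ->] Cz def_y]]] := RxC_full y.
(* x = r y = r (s x + z) = r z, since r kills x *)
apply: RxC0; first by exists 1; rewrite scale1r.
have -> : x = r *: z by rewrite def_x def_y scalerDr scalerC rx0 scaler0 add0r.
by case: sC => _ _ CZ; apply: CZ.
Qed.

Lemma semisimple_scale_ker_add_img r (m : M) :
  exists x y, [/\ scale_ker r x, scale_img r y & m = x + y].
Proof.
have [C [sC rMC0 rMC_full]] := ssM (submodule_scale_img r).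
have [y [x [rMy Cx ->]]] := rMC_full m.
exists x, y; split; rewrite 1?addrC //.
by apply: rMC0; [exists x | case: sC => _ _ CZ; apply: CZ].
Qed.

End Semisimple.

Section Indecomposable.
Variable phi : M -> M.
Hypotheses (phiL : is_endo phi) (phi_indec : indecomposable_endo phi).

Lemma indecomposable_idem e : is_endo e -> (forall x, e (e x) = e x) ->
  (forall x, e (phi x) = phi (e x)) -> (forall x, e x = 0) \/ (forall x, e x = x).
Proof.
move=> eL e_idem e_phi; apply: NNPP => not_triv; apply: phi_indec.
by exists e; split => // e_triv; apply: not_triv; [left | right].
Qed.

Lemma semisimple_scale0_or_inj : semisimple_module M -> forall r,
  (forall x, r *: x = 0) \/ (forall x, r *: x = 0 -> x = 0).
Proof.
move=> ssM r.
have [e [eL ker_e img_e e_id e_uniq]] :=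
  submodule_proj (submodule_scale_ker r) (submodule_scale_img r)
    (@semisimple_scale_kerI_img ssM r) (semisimple_scale_ker_add_img ssM r).
have e_phi x : e (phi x) = phi (e x).
  apply: (e_uniq _ _ (phi (x - e x))).
  - by rewrite /scale_ker -(endoZ phiL) ker_e (endo0 phiL).
  - by case: (img_e x) => y ->; exists (phi y); rewrite (endoZ phiL).
  - by rewrite -(endoD phiL) subrKC.
have [e0|e1] := indecomposable_idem eL (fun x => e_id _ (ker_e x)) e_phi.
- by right => x rx0; rewrite -(e_id _ rx0) e0.
- by left => x; rewrite -(e1 x); apply: ker_e.
Qed.

End Indecomposable.

Section CyclicSpan.
Variables (phi : M -> M) (n' : nat) (u0 : M).
Hypotheses (ssM : semisimple_module M) (phiL : is_endo phi)
  (phi_nil : forall u, iter n'.+1 phi u = 0) (phi_indec : indecomposable_endo phi)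
  (u0_top : iter n' phi u0 <> 0).

Lemma iter_nil m u : (n'.+1 <= m)%N -> iter m phi u = 0.
Proof. by move=> le_nm; rewrite -(subnK le_nm) iterD phi_nil (endo0 (endo_iter phiL _)). Qed.

Lemma orbit_coef_ann (c : 'I_n'.+1 -> R) :
  \sum_(i < n'.+1) c i *: iter i phi u0 = 0 -> forall i (x : M), c i *: x = 0.
Proof.
move=> c_rel.
suff c_ann j (i : 'I_n'.+1) : (i < j)%N -> forall x : M, c i *: x = 0.
  by move=> i; apply: (c_ann n'.+1 i (ltn_ord i)).
elim: j i => [//|j IHj] i; rewrite ltnS leq_eqVlt => /orP[/eqP eq_ij | lt_ij]; last exact: IHj.
have [//|ci_inj] := semisimple_scale0_or_inj phiL phi_indec ssM (c i).
have iterL := endo_iter phiL (n' - i).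
(* every term but the i-th vanishes after applying phi^(n'-i) *)
exfalso; apply/u0_top/ci_inj.
have := congr1 (iter (n' - i) phi) c_rel.
rewrite (endo0 iterL) (endo_sum iterL) (bigD1 i) //= big1 ?addr0.
  by rewrite (endoZ iterL) -iterD subnK // -ltnS.
move=> k neq_ki; rewrite (endoZ iterL) -iterD.
have {}neq_ki : (k : nat) <> i by move=> eq_ki; move/eqP: neq_ki; apply; apply: val_inj.
have [lt_ki | le_ik] := ltnP k i; first by rewrite (IHj k) // -eq_ij.
by rewrite iter_nil ?scaler0 //; have := ltn_ord i; lia.
Qed.

Lemma orbit_coef_uniq (c d : 'I_n'.+1 -> R) :
  \sum_(i < n'.+1) c i *: iter i phi u0 = \sum_(i < n'.+1) d i *: iter i phi u0 ->
  forall i (x : M), c i *: x = d i *: x.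
Proof.
move=> eq_cd i x; apply/eqP; rewrite -subr_eq0 -scalerBl; apply/eqP.
apply: (@orbit_coef_ann (fun i => c i - d i)).
under eq_bigr => k _ do rewrite scalerBl.
by rewrite sumrB eq_cd subrr.
Qed.

Definition orbit_span (x : M) : Prop :=
  exists c : 'I_n'.+1 -> R, x = \sum_(i < n'.+1) c i *: iter i phi u0.

Lemma submodule_orbit_span : submodule orbit_span.
Proof.
split.
- by exists (fun _ => 0); rewrite big1 // => i _; rewrite scale0r.
- move=> _ _ [c ->] [d ->]; exists (fun i => c i + d i).
  by rewrite -big_split; apply: eq_bigr => i _; rewrite scalerDl.
- move=> a _ [c ->]; exists (fun i => a * c i).
  by rewrite scaler_sumr; apply: eq_bigr => i _; rewrite scalerA.
Qed.

Lemma orbit_span_iter m : orbit_span (iter m phi u0).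
Proof.
have [lt_mn | le_nm] := ltnP m n'.+1; last first.
  by rewrite iter_nil //; case: submodule_orbit_span.
by exists (fun i : 'I_n'.+1 => ((i : nat) == m)%:R); rewrite sum_indicator.
Qed.

Lemma orbit_top_coef : exists g : M -> M, [/\ is_endo g,
  (exists top : M -> R, forall m, g m = top m *: u0)
  & (forall m, g (iter m phi u0) = (m == n')%:R *: u0)].
Proof.
have [C [sC spanC0 spanC_full]] := ssM submodule_orbit_span.
have [pi [piL pi_span _ pi_id _]] :=
  submodule_proj submodule_orbit_span sC spanC0 spanC_full.
have [cf cfP] := functional_choice _ pi_span.
pose g m := cf m ord_max *: u0.
(* coefficients are only unique up to annihilators of M, which is exactly what
   is needed for g to be well defined and linear *)
have gL : is_endo g.
  move=> a m1 m2; rewrite /g scalerA -scalerDl.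
  apply: (@orbit_coef_uniq (cf (a *: m1 + m2)) (fun i => a * cf m1 i + cf m2 i)).
  rewrite -!cfP piL !cfP scaler_sumr -big_split.
  by apply: eq_bigr => i _; rewrite scalerDl scalerA.
exists g; split => // [|m]; first by exists (fun m => cf m ord_max).
have [lt_mn | le_nm] := ltnP m n'.+1; last first.
  by rewrite iter_nil // (endo0 gL) (_ : (m == n') = false) ?scale0r //; apply/eqP; lia.
rewrite /g eq_sym.
apply: (@orbit_coef_uniq (cf (iter m phi u0)) (fun i : 'I_n'.+1 => ((i : nat) == m)%:R)).
by rewrite -cfP pi_id ?sum_indicator //; apply: orbit_span_iter.
Qed.

Section OrbitProjection.
Variable g : M -> M.
Hypotheses (gL : is_endo g) (g_top : exists top : M -> R, forall m, g m = top m *: u0)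
  (g_iter : forall m, g (iter m phi u0) = (m == n')%:R *: u0).

(* phi^k o g o phi^(n'-k) reads off the coefficient of phi^k u0 *)
Definition orbit_proj (m : M) : M :=
  \sum_(k < n'.+1) iter k phi (g (iter (n' - k) phi m)).

Lemma orbit_proj_endo : is_endo orbit_proj.
Proof.
move=> a m1 m2; rewrite /orbit_proj scaler_sumr -big_split; apply: eq_bigr => k _.
by rewrite (endo_iter phiL) gL (endo_iter phiL).
Qed.

Lemma orbit_proj_phi x : orbit_proj (phi x) = phi (orbit_proj x).
Proof.
rewrite /orbit_proj (endo_sum phiL) big_ord_recl big_ord_recr /=.
rewrite subn0 -iterSr phi_nil (endo0 gL) add0r -iterS phi_nil addr0.
apply: eq_bigr => i _; rewrite add0n; congr (phi (iter _ phi (g _))).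
by rewrite -iterSr /bump /= add1n -iterS subnSK.
Qed.

Lemma orbit_proj_iter (j : 'I_n'.+1) : orbit_proj (iter j phi u0) = iter j phi u0.
Proof.
rewrite /orbit_proj (bigD1 j) //= big1 ?addr0.
  by rewrite -iterD subnK ?g_iter ?eqxx ?scale1r // -ltnS.
move=> k neq_kj; rewrite -iterD g_iter.
have {}neq_kj : (k : nat) <> j by move=> eq_kj; move/eqP: neq_kj; apply; apply: val_inj.
rewrite (_ : (n' - k + j == n')%N = false) ?scale0r ?(endo0 (endo_iter phiL _)) //.
by apply/eqP; have := ltn_ord k; have := ltn_ord j; lia.
Qed.

Lemma orbit_proj_span x : orbit_span (orbit_proj x).
Proof.
have [top def_g] := g_top; exists (fun k => top (iter (n' - k) phi x)).
by apply: eq_bigr => k _; rewrite def_g (endoZ (endo_iter phiL _)).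
Qed.

Lemma orbit_proj_id x : orbit_span x -> orbit_proj x = x.
Proof.
case=> c ->; rewrite (endo_sum orbit_proj_endo); apply: eq_bigr => i _.
by rewrite (endoZ orbit_proj_endo) orbit_proj_iter.
Qed.

End OrbitProjection.

Lemma orbit_span_full (m : M) : orbit_span m.
Proof.
have [g [gL g_top g_iter]] := orbit_top_coef.
have e_idem x : orbit_proj g (orbit_proj g x) = orbit_proj g x.
  by apply: orbit_proj_id => //; apply: orbit_proj_span.
have [e0|e1] := indecomposable_idem phi_indec (orbit_proj_endo gL) e_idem
  (orbit_proj_phi gL).
- by case: u0_top; rewrite -(orbit_proj_iter g_iter ord_max) e0.
- by rewrite -(e1 m); apply: orbit_proj_span.
Qed.

Lemma commute_orbit_poly psi : is_endo psi -> (forall u, psi (phi u) = phi (psi u)) ->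
  exists a : 'I_n'.+1 -> R, forall u, \sum_(i < n'.+1) a i *: iter i phi u = psi u.
Proof.
move=> psiL psi_phi.
have psi_iter j u : psi (iter j phi u) = iter j phi (psi u).
  by elim: j => [|j IHj] //=; rewrite psi_phi IHj.
have [a def_psi_u0] := orbit_span_full (psi u0).
exists a => u; have [c ->] := orbit_span_full u.
rewrite (endo_sum psiL).
under [RHS]eq_bigr => j _ do rewrite (endoZ psiL) psi_iter def_psi_u0
  (endo_sum (endo_iter phiL _)) scaler_sumr.
under [LHS]eq_bigr => i _ do rewrite (endo_sum (endo_iter phiL _)) scaler_sumr.
rewrite exchange_big /=; apply: eq_bigr => j _; apply: eq_bigr => i _.
by rewrite !(endoZ (endo_iter phiL _)) -!iterD scalerC addnC.
Qed.

End CyclicSpan.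

End Endomorphisms.

Theorem corollary4p9 (R : comPzRingType) (M : lmodType R)
  (phi psi : M -> M) (n : nat) :
  fin_gen_module M -> semisimple_module M ->
  is_endo phi ->
  (forall u, iter n phi u = 0) -> ~ (forall u, iter n.-1 phi u = 0) ->
  indecomposable_endo phi ->
  is_endo psi ->
  ((forall u, psi (phi u) = phi (psi u)) <->
   exists a : 'I_n -> R,
     forall u, \sum_(i < n) a i *: iter i phi u = psi u).
Proof.
move=> _ ssM phiL phi_nil phi_not_nil phi_indec psiL.
case: n phi_nil phi_not_nil => [|n'] phi_nil phi_not_nil.
  by case: (phi_not_nil phi_nil).
have [u0 u0_top] := not_all_ex_not _ _ phi_not_nil.
split=> [psi_phi | [a def_psi] u].
  exact: (commute_orbit_poly ssM phiL phi_nil phi_indec u0_top psiL psi_phi).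
rewrite -!def_psi (endo_sum phiL); apply: eq_bigr => i _.
by rewrite (endoZ phiL) -iterS iterSr.
Qed.
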